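(* Let $C_0>0$, $C_1\ge0$, $p>1$, $q>1$ and $t_0\ge2$, and let $\Phi$ be a real-valued differentiable function on $[t_0,\infty)$ satisfying $$\frac{d\Phi}{dt}(t)\le-\frac{C_0}{t}|\Phi(t)|^p+\frac{C_1}{t^q},\qquad t\ge t_0.$$ Then $$\Phi(t)\le\frac{C_2}{(\log t)^{p^*-1}},\qquad t\ge t_0,$$ where $p^*$ is the H\''older conjugate of $p$ (i.e. $1/p+1/p^*=1$) and $$C_2=\frac1{\log2}\Bigl((\log t_0)^{p^*}\Phi(t_0)+C_1\int_2^\infty\frac{(\log\tau)^{p^*}}{\tau^q}d\tau\Bigr)+\Bigl(\frac{p^*}{C_0p}\Bigr)^{p^*-1}.$$ *)

From Stdlib Require Import Reals.
From Coquelicot Require Import Coquelicot.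
Open Scope R_scope.

(* x^y for x >= 0 with the convention 0^y = 0 (y > 0 in all uses). *)
Definition rpow (x y : R) : R :=
  if Req_EM_T x 0 then 0 else Rpower x y.

(* f has derivative l at t relative to the domain [t0, +oo)
   (one-sided at the endpoint t = t0). *)
Definition has_deriv_on_ge (t0 : R) (f : R -> R) (t l : R) : Prop :=
  filterlim (fun s => (f s - f t) / (s - t))
    (within (fun s => t0 <= s /\ s <> t) (locally t)) (locally l).

From Stdlib Require Import Reals Lra.
From Coquelicot Require Import Coquelicot.
Open Scope R_scope.

(* Put B := (ln t0)^p* Phi(t0) + C1 I, with I the integral of (ln t)^p* / t^q over
   [2, +oo), and K := (p* / (C0 p))^(p*-1).  Multiplying the differential inequality
   by (ln t)^p* and bounding (p* (ln t)^(p*-1) Phi - C0 (ln t)^p* |Phi|^p) / t by K / t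
   (Young's inequality) shows that
     (ln t)^p* Phi(t) - C1 \int_t0^t (ln tau)^p* / tau^q dtau - K ln t
   is nonincreasing, whence (ln t)^p* Phi(t) <= B + K ln t.  Since ln t >= ln 2 this
   gives the claim as soon as B >= 0.  If B < 0, then
     V(t) := -Phi(t) - C1 (I - \int_t0^t (ln tau)^p* / tau^q dtau) / (ln t)^p*
   starts positive and satisfies V' >= C0 |Phi|^p / t >= C0 V^p / t, so
   V^(1-p) + (p-1) C0 ln t is nonincreasing: impossible, as it tends to +oo. *)

Lemma ln_gt0 (x : R) : 1 < x -> 0 < ln x.
Proof. intros Hx; rewrite <- ln_1; apply ln_increasing; lra. Qed.

Lemma rpowE (x y : R) : 0 < x -> rpow x y = exp (y * ln x).
Proof. intros Hx; unfold rpow; destruct (Req_EM_T x 0); [lra | reflexivity]. Qed.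

Lemma rpow_ge0 (x y : R) : 0 <= rpow x y.
Proof.
  unfold rpow; destruct (Req_EM_T x 0); [lra |].
  unfold Rpower; left; apply exp_pos.
Qed.

Lemma rpow_le_compat (x y r : R) : 0 < x <= y -> 0 <= r -> rpow x r <= rpow y r.
Proof.
  intros Hxy Hr; unfold rpow.
  destruct (Req_EM_T x 0), (Req_EM_T y 0); try lra.
  apply Rle_Rpower_l; assumption.
Qed.

Lemma conjugate_exponent_gt1 (p s : R) : 1 < p -> 1 / p + 1 / s = 1 -> 1 < s.
Proof.
  intros Hp Hs.
  assert (Hinv : 0 < / p < 1).
  { split; [apply Rinv_0_lt_compat; lra|].
    rewrite <- Rinv_1; apply Rinv_lt_contravar; lra. }
  assert (Hs' : / s = 1 - / p) by (unfold Rdiv in Hs; lra).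
  rewrite <- (Rinv_inv s), Hs'. rewrite <- Rinv_1 at 1.
  apply Rinv_lt_contravar; lra.
Qed.

Lemma conjugate_exponent_mul (p s : R) : 1 < p -> 1 / p + 1 / s = 1 -> p * (s - 1) = s.
Proof.
  intros Hp Hs. assert (Hs1 := conjugate_exponent_gt1 p s Hp Hs).
  assert (e : p * s * (1 / p + 1 / s) = p + s) by (field; lra).
  rewrite Hs in e. lra.
Qed.

Lemma exp_convex (l X Y : R) : 0 < l < 1 ->
  exp (l * X + (1 - l) * Y) <= l * exp X + (1 - l) * exp Y.
Proof.
  intros Hl. set (m := l * X + (1 - l) * Y).
  assert (tangent : forall Z, exp m * (1 + (Z - m)) <= exp Z).
  { intros Z. replace Z with (m + (Z - m)) at 2 by ring. rewrite exp_plus.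
    apply Rmult_le_compat_l; [left; apply exp_pos | apply exp_ineq1_le]. }
  assert (hX := tangent X); assert (hY := tangent Y).
  assert (e : l * (exp m * (1 + (X - m))) + (1 - l) * (exp m * (1 + (Y - m))) = exp m)
    by (unfold m; ring).
  apply Rmult_le_compat_l with (r := l) in hX; [| lra].
  apply Rmult_le_compat_l with (r := 1 - l) in hY; [| lra].
  lra.
Qed.

Lemma young_exp (p s a b : R) : 1 < p -> 1 / p + 1 / s = 1 ->
  exp (a + b) <= exp (p * a) / p + exp (s * b) / s.
Proof.
  intros Hp Hs.
  assert (Hs1 := conjugate_exponent_gt1 p s Hp Hs).
  assert (Hl : 0 < / p < 1).
  { split; [apply Rinv_0_lt_compat; lra|].
    rewrite <- Rinv_1; apply Rinv_lt_contravar; lra. }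
  assert (e1 : 1 - / p = / s) by (unfold Rdiv in Hs; lra).
  assert (h := exp_convex (/ p) (p * a) (s * b) Hl).
  rewrite e1 in h.
  replace (/ p * (p * a) + / s * (s * b)) with (a + b) in h by (field; lra).
  unfold Rdiv; lra.
Qed.

Lemma young_weighted (C p s u x : R) : 0 < C -> 1 < p -> 1 / p + 1 / s = 1 -> 0 < u ->
  s * exp ((s - 1) * ln u) * x - C * exp (s * ln u) * rpow (Rabs x) p
  <= rpow (s / (C * p)) (s - 1).
Proof.
  intros HC Hp Hs Hu.
  assert (Hs1 := conjugate_exponent_gt1 p s Hp Hs).
  assert (Hps := conjugate_exponent_mul p s Hp Hs).
  assert (HCp : 0 < C * p) by (apply Rmult_lt_0_compat; lra).
  destruct (Rle_or_lt x 0) as [Hx | Hx].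
  - assert (0 <= C * exp (s * ln u) * rpow (Rabs x) p).
    { apply Rmult_le_pos; [apply Rmult_le_pos; [lra | left; apply exp_pos] | apply rpow_ge0]. }
    assert (s * exp ((s - 1) * ln u) * x <= 0).
    { apply Rmult_le_0_l; [| exact Hx].
      apply Rmult_le_pos; [lra | left; apply exp_pos]. }
    pose proof (rpow_ge0 (s / (C * p)) (s - 1)). lra.
  - (* Young's inequality for the factorization
       [s u^(s-1) x = ((C p)^(1/p) u^(s-1) x) * (s (C p)^(-1/p))]. *)
    set (a := ln (C * p) / p + (s - 1) * ln u + ln x).
    set (b := ln s - ln (C * p) / p).
    assert (Y := young_exp p s a b Hp Hs).
    assert (Eab : exp (a + b) = s * exp ((s - 1) * ln u) * x).
    { replace (a + b) with (ln s + (s - 1) * ln u + ln x) by (unfold a, b; ring).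
      rewrite !exp_plus, !exp_ln by lra. ring. }
    assert (Ea : exp (p * a) / p = C * exp (s * ln u) * rpow (Rabs x) p).
    { rewrite Rabs_right, rpowE by lra.
      replace (p * a) with (ln (C * p) + s * ln u + p * ln x)
        by (rewrite <- Hps at 1; unfold a; field; lra).
      rewrite !exp_plus, exp_ln by lra. field; lra. }
    assert (Eb : exp (s * b) / s = rpow (s / (C * p)) (s - 1)).
    { rewrite rpowE by (apply Rdiv_lt_0_compat; lra).
      rewrite ln_div by lra.
      assert (Hsp : s / p = s - 1) by (rewrite <- Hps at 1; field; lra).
      replace (s * b) with (ln s + (s - 1) * (ln s - ln (C * p))).
      2: { transitivity (s * ln s - s / p * ln (C * p)); [rewrite Hsp; ring | unfold b; field; lra]. }
      rewrite exp_plus, exp_ln by lra. field; lra. }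
    lra.
Qed.

Lemma le_of_derive_nonpos (f df : R -> R) (a b : R) : a <= b ->
  (forall x, a < x -> is_derive f x (df x)) -> continuous f a ->
  (forall x, a <= x -> df x <= 0) -> f b <= f a.
Proof.
  intros Hab Hd Hc Hs.
  destruct (MVT_gen f a b df) as [c [Hc1 Hc2]];
    rewrite ?Rmin_left, ?Rmax_right in * by lra.
  - intros x Hx; apply Hd; lra.
  - intros x [[Hx | <-] _]; apply continuity_pt_filterlim; [| exact Hc].
    apply (@ex_derive_continuous R_AbsRing R_NormedModule).
    exists (df x); apply Hd; exact Hx.
  - assert (df c * (b - a) <= 0) by (apply Rmult_le_0_r; [apply Hs |]; lra).
    lra.
Qed.

Lemma continuous_mul_add (a f b : R -> R) (x : R) :
  ex_derive a x -> continuous f x -> ex_derive b x ->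
  continuous (fun y => a y * f y + b y) x.
Proof.
  intros Ha Hf Hb.
  apply (@continuous_plus R_UniformSpace R_AbsRing R_NormedModule);
    [apply (@continuous_mult R_UniformSpace R_AbsRing); [| exact Hf] |];
    apply (@ex_derive_continuous R_AbsRing R_NormedModule); assumption.
Qed.

Definition extend_left (t0 : R) (f : R -> R) (y : R) : R := f (Rmax t0 y).

Lemma is_derive_extend_left (t0 : R) (f : R -> R) (x l : R) : t0 < x ->
  has_deriv_on_ge t0 f x l -> is_derive (extend_left t0 f) x l.
Proof.
  intros Hx H. apply is_derive_Reals. intros eps Heps.
  destruct (H (ball l eps) (locally_ball l (mkposreal eps Heps))) as [d Hd].
  assert (Hd0 : 0 < Rmin d (x - t0)) by (apply Rmin_pos; [apply cond_pos | lra]).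
  exists (mkposreal _ Hd0). intros h Hh0 Hh. simpl in Hh.
  assert (Hhd : Rabs h < d) by (eapply Rlt_le_trans; [exact Hh | apply Rmin_l]).
  assert (Hht : Rabs h < x - t0) by (eapply Rlt_le_trans; [exact Hh | apply Rmin_r]).
  apply Rabs_def2 in Hht as [Hht1 Hht2].
  assert (Hb : ball x d (x + h)).
  { change (Rabs (x + h - x) < d). replace (x + h - x) with h by ring. exact Hhd. }
  assert (Hdom : t0 <= x + h /\ x + h <> x) by (split; [lra | intro; apply Hh0; lra]).
  specialize (Hd (x + h) Hb Hdom).
  change (Rabs ((f (x + h) - f x) / (x + h - x) - l) < eps) in Hd.
  unfold extend_left. rewrite !Rmax_right by lra.
  replace (x + h - x) with h in Hd by ring. exact Hd.
Qed.

Lemma continuous_extend_left (t0 : R) (f : R -> R) (l : R) :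
  has_deriv_on_ge t0 f t0 l -> continuous (extend_left t0 f) t0.
Proof.
  intros H. apply continuity_pt_filterlim. intros eps Heps.
  destruct (H (ball l 1) (locally_ball l (mkposreal 1 Rlt_0_1))) as [d Hd].
  assert (Hk : 0 < Rabs l + 1) by (pose proof (Rabs_pos l); lra).
  exists (Rmin d (eps / (Rabs l + 1))). split.
  { apply Rmin_pos; [apply cond_pos | apply Rdiv_lt_0_compat; lra]. }
  intros y [_ Hy]. simpl in Hy |- *. unfold R_dist in Hy |- *. unfold extend_left.
  rewrite (Rmax_left t0 t0) by lra.
  destruct (Rle_or_lt y t0) as [Hle | Hlt].
  { rewrite Rmax_left, Rminus_diag, Rabs_R0 by lra. exact Heps. }
  rewrite Rmax_right by lra.
  assert (Hyd : Rabs (y - t0) < d) by (eapply Rlt_le_trans; [exact Hy | apply Rmin_l]).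
  assert (Hye : Rabs (y - t0) < eps / (Rabs l + 1))
    by (eapply Rlt_le_trans; [exact Hy | apply Rmin_r]).
  rewrite Rabs_right in Hye by lra.
  specialize (Hd y Hyd (conj (Rlt_le _ _ Hlt) (Rgt_not_eq _ _ Hlt))).
  change (Rabs ((f y - f t0) / (y - t0) - l) < 1) in Hd.
  set (slope := (f y - f t0) / (y - t0)) in Hd.
  assert (Hslope : Rabs slope < Rabs l + 1).
  { pose proof (Rabs_triang_inv slope l). lra. }
  replace (f y - f t0) with (slope * (y - t0)) by (unfold slope; field; lra).
  rewrite Rabs_mult, (Rabs_right (y - t0)) by lra.
  apply Rle_lt_trans with ((Rabs l + 1) * (y - t0)).
  - apply Rmult_le_compat_r; lra.
  - apply Rmult_lt_reg_r with (/ (Rabs l + 1)); [apply Rinv_0_lt_compat; lra |].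
    replace ((Rabs l + 1) * (y - t0) * / (Rabs l + 1)) with (y - t0) by (field; lra).
    exact Hye.
Qed.

Lemma RInt_le_is_RInt_gen (f : R -> R) (c a b I : R) : c <= a <= b ->
  (forall x y, c <= x -> c <= y -> ex_RInt f x y) ->
  (forall x, c <= x -> 0 <= f x) ->
  is_RInt_gen f (at_point c) (Rbar_locally p_infty) I -> RInt f a b <= I.
Proof.
  intros Hab Hex Hf HI.
  assert (Hnonneg : forall x y, c <= x <= y -> 0 <= RInt f x y).
  { intros x y Hxy. apply RInt_ge_0; [lra | apply Hex; lra |].
    intros z Hz; apply Hf; lra. }
  assert (Hmono : forall y, b <= y -> RInt f a b <= RInt f c y).
  { intros y Hy.
    rewrite <- (RInt_Chasles f c a y), <- (RInt_Chasles f a b y) by (apply Hex; lra).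
    pose proof (Hnonneg c a ltac:(lra)). pose proof (Hnonneg b y ltac:(lra)).
    change (RInt f a b <= RInt f c a + (RInt f a b + RInt f b y)). lra. }
  destruct (Rle_or_lt (RInt f a b) I) as [Hle | Hgt]; [exact Hle | exfalso].
  assert (Heps : 0 < (RInt f a b - I) / 2) by lra.
  destruct (HI (ball I (mkposreal _ Heps)) (locally_ball I (mkposreal _ Heps)))
    as [Qc Qoo HQc [M HM] HQ].
  assert (HMb : M < Rmax b (M + 1)) by (pose proof (Rmax_r b (M + 1)); lra).
  destruct (HQ c (Rmax b (M + 1)) HQc (HM _ HMb)) as [y [Hy Hball]].
  apply (@is_RInt_unique R_CompleteNormedModule) in Hy. simpl in Hy.
  change (Rabs (y - I) < (RInt f a b - I) / 2) in Hball.
  apply Rabs_def2 in Hball as [Hball _].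
  pose proof (Hmono (Rmax b (M + 1)) (Rmax_l _ _)). lra.
Qed.

(* [(ln x)^s] for [x > 1], written with [exp] rather than [rpow] so that it is
   differentiable by [auto_derive]. *)
Definition logpow (s x : R) : R := exp (s * ln (ln x)).

Lemma logpow_gt0 (s x : R) : 0 < logpow s x.
Proof. apply exp_pos. Qed.

Lemma logpow_rpow (s x : R) : 1 < x -> logpow s x = rpow (ln x) s.
Proof. intros Hx; rewrite rpowE by (apply ln_gt0; exact Hx); reflexivity. Qed.

Lemma is_derive_logpow (s x : R) : 1 < x ->
  is_derive (logpow s) x (s * logpow s x / (x * ln x)).
Proof.
  intros Hx. assert (Hl := ln_gt0 x Hx). unfold logpow. auto_derive.
  - repeat split; lra.
  - field; lra.
Qed.

Lemma no_positive_supersolution (c p t0 : R) (V dV : R -> R) :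
  0 < c -> 1 < p -> 0 < t0 ->
  (forall x, t0 < x -> is_derive V x (dV x)) -> continuous V t0 ->
  (forall x, t0 <= x -> 0 < V x) ->
  (forall x, t0 <= x -> c / x * rpow (V x) p <= dV x) -> False.
Proof.
  intros Hc Hp Ht0 HdV HcV HV Hsuper.
  (* [V^(1-p) + (p-1) c ln x] is nonincreasing, yet its second term is unbounded. *)
  set (G := fun x => exp ((1 - p) * ln (V x)) + (p - 1) * c * ln x).
  set (dG := fun x => exp ((1 - p) * ln (V x)) * ((1 - p) * (dV x / V x)) + (p - 1) * c / x).
  assert (HdG : forall x, t0 < x -> is_derive G x (dG x)).
  { intros x Hx.
    assert (Hlog := is_derive_comp ln V x _ _ (is_derive_ln (V x) (HV x ltac:(lra))) (HdV x Hx)).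
    assert (Hpow := is_derive_comp exp _ x _ _ (is_derive_exp ((1 - p) * ln (V x)))
                      (is_derive_scal _ x (1 - p) _ Hlog)).
    assert (Hln := is_derive_scal _ x ((p - 1) * c) _ (is_derive_ln x ltac:(lra))).
    assert (H := is_derive_plus _ _ x _ _ Hpow Hln).
    apply (eq_ind _ (is_derive G x) H).
    unfold dG, plus, scal; simpl; unfold mult; simpl.
    field; split; apply Rgt_not_eq; try apply HV; lra. }
  assert (HdG_nonpos : forall x, t0 <= x -> dG x <= 0).
  { intros x Hx. assert (HVx := HV x Hx).
    assert (Hone : exp ((1 - p) * ln (V x)) * rpow (V x) p = V x).
    { rewrite rpowE, <- exp_plus by exact HVx.
      replace ((1 - p) * ln (V x) + p * ln (V x)) with (ln (V x)) by ring.
      apply exp_ln; exact HVx. }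
    assert (Hk : (1 - p) * exp ((1 - p) * ln (V x)) / V x < 0).
    { apply Rdiv_neg_pos; [| exact HVx].
      apply Rmult_neg_pos; [lra | apply exp_pos]. }
    assert (H := Rmult_le_compat_neg_l _ _ _ (Rlt_le _ _ Hk) (Hsuper x Hx)).
    replace ((1 - p) * exp ((1 - p) * ln (V x)) / V x * (c / x * rpow (V x) p))
      with ((1 - p) * c / x) in H.
    2: { transitivity ((1 - p) * c / x * (exp ((1 - p) * ln (V x)) * rpow (V x) p / V x)).
         - rewrite Hone. field. split; lra.
         - field. split; lra. }
    unfold dG. unfold Rdiv in *. lra. }
  assert (HG_cont : continuous G t0).
  { apply (@continuous_plus R_UniformSpace R_AbsRing R_NormedModule).
    - apply (continuous_comp (fun x => (1 - p) * ln (V x)) exp).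
      + apply (@continuous_mult R_UniformSpace R_AbsRing); [apply continuous_const |].
        apply (continuous_comp V ln); [exact HcV |].
        apply (@ex_derive_continuous R_AbsRing R_NormedModule).
        exists (/ V t0); apply is_derive_ln, HV; lra.
      + apply (@ex_derive_continuous R_AbsRing R_NormedModule).
        exists (exp ((1 - p) * ln (V t0))); apply is_derive_exp.
    - apply (@ex_derive_continuous R_AbsRing R_NormedModule).
      auto_derive; lra. }
  set (T := Rmax t0 (exp (G t0 / ((p - 1) * c)))).
  assert (HT : G t0 <= (p - 1) * c * ln T).
  { assert (Hpc : 0 < (p - 1) * c) by (apply Rmult_lt_0_compat; lra).
    apply (Rmult_le_reg_l (/ ((p - 1) * c))); [apply Rinv_0_lt_compat; exact Hpc |].
    replace (/ ((p - 1) * c) * ((p - 1) * c * ln T)) with (ln T) by (field; lra).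
    rewrite <- (ln_exp (/ ((p - 1) * c) * G t0)).
    apply ln_le; [apply exp_pos |].
    rewrite Rmult_comm; apply Rmax_r. }
  assert (HGT : G T <= G t0).
  { apply (le_of_derive_nonpos G dG t0 T (Rmax_l _ _) HdG HG_cont).
    intros x Hx; apply HdG_nonpos; exact Hx. }
  pose proof (exp_pos ((1 - p) * ln (V T))). unfold G in HGT, HT. lra.
Qed.

Definition log_density (s q x : R) : R := rpow (ln x) s / rpow x q.

Lemma log_densityE (s q x : R) : 1 < x -> log_density s q x = logpow s x / rpow x q.
Proof. intros Hx; unfold log_density; rewrite logpow_rpow by lra; reflexivity. Qed.

Lemma log_density_ge0 (s q x : R) : 1 < x -> 0 <= log_density s q x.
Proof.
  intros Hx; rewrite log_densityE, rpowE by lra.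
  apply Rdiv_le_0_compat; [left |]; apply exp_pos.
Qed.

Lemma continuous_log_density (s q x : R) : 1 < x -> continuous (log_density s q) x.
Proof.
  intros Hx. apply (continuous_ext_loc _ (fun y => logpow s y / exp (q * ln y))).
  - apply (filter_imp (fun y => 1 < y)); [| exact (open_gt 1 x Hx)].
    intros y Hy; rewrite log_densityE, rpowE by lra; reflexivity.
  - assert (Hl := ln_gt0 x Hx). apply (@ex_derive_continuous R_AbsRing R_NormedModule).
    unfold logpow; auto_derive. repeat split; try lra.
    apply Rgt_not_eq, exp_pos.
Qed.

Lemma ex_RInt_log_density (s q a b : R) : 1 < a -> 1 < b -> ex_RInt (log_density s q) a b.
Proof.
  intros Ha Hb. apply (@ex_RInt_continuous R_CompleteNormedModule).
  intros z [Hz _]. apply continuous_log_density.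
  assert (1 < Rmin a b) by (apply Rmin_glb_lt; lra). lra.
Qed.

Section Logarithmic_decay.

Variables (C0 C1 p q t0 s I : R) (Phi dPhi : R -> R).
Hypotheses (HC0 : 0 < C0) (HC1 : 0 <= C1) (Hp : 1 < p) (Ht0 : 2 <= t0)
  (Hs : 1 / p + 1 / s = 1).
Hypothesis Hder : forall t, t0 <= t -> has_deriv_on_ge t0 Phi t (dPhi t).
Hypothesis Hineq : forall t, t0 <= t ->
  dPhi t <= - (C0 / t) * rpow (Rabs (Phi t)) p + C1 / rpow t q.
Hypothesis HI : is_RInt_gen (log_density s q) (at_point 2) (Rbar_locally p_infty) I.

Let P (y : R) : R := RInt (log_density s q) t0 y.
Let K : R := rpow (s / (C0 * p)) (s - 1).

Lemma P_le (x : R) : t0 <= x -> P x <= I.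
Proof.
  intros Hx. apply (RInt_le_is_RInt_gen _ 2); [lra | | | exact HI].
  - intros a b Ha Hb; apply ex_RInt_log_density; lra.
  - intros a Ha; apply log_density_ge0; lra.
Qed.

Lemma is_derive_P (x : R) : 1 < x -> is_derive P x (log_density s q x).
Proof.
  intros Hx. apply (@is_derive_RInt R_NormedModule _ _ t0).
  - apply (filter_imp (fun y => 1 < y)); [| apply (open_gt 1 x); lra].
    intros y Hy. apply (@RInt_correct R_CompleteNormedModule).
    apply ex_RInt_log_density; lra.
  - apply continuous_log_density; lra.
Qed.

Let U (y : R) : R := logpow s y * extend_left t0 Phi y - C1 * P y - K * ln y.
Let dU (y : R) : R :=
  s * logpow s y / (y * ln y) * Phi y + logpow s y * dPhi y - C1 * log_density s q y - K / y.

Lemma is_derive_U (y : R) : t0 < y -> is_derive U y (dU y).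
Proof.
  intros Hy.
  assert (H := is_derive_minus _ _ y _ _
    (is_derive_minus _ _ y _ _
       (is_derive_mult _ _ y _ _ (is_derive_logpow s y ltac:(lra))
          (is_derive_extend_left t0 Phi y _ Hy (Hder y ltac:(lra))) Rmult_comm)
       (is_derive_scal _ y C1 _ (is_derive_P y ltac:(lra))))
    (is_derive_scal _ y K _ (is_derive_ln y ltac:(lra)))).
  apply (eq_ind _ (is_derive U y) H).
  unfold dU, extend_left, minus, plus, opp, mult, scal; simpl; unfold mult; simpl.
  rewrite Rmax_right by lra.
  field; repeat split; apply Rgt_not_eq; try apply ln_gt0; lra.
Qed.

Lemma derive_U_nonpos (y : R) : t0 <= y -> dU y <= 0.
Proof.
  intros Hy. assert (Hu := ln_gt0 y ltac:(lra)).
  assert (Hyq : 0 < rpow y q) by (rewrite rpowE by lra; apply exp_pos).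
  assert (HE : logpow s y = exp (s * ln (ln y))) by reflexivity.
  assert (HEu : exp ((s - 1) * ln (ln y)) = logpow s y / ln y).
  { rewrite HE. replace (s * ln (ln y)) with ((s - 1) * ln (ln y) + ln (ln y)) by ring.
    rewrite exp_plus, exp_ln by exact Hu. field; lra. }
  assert (HY := young_weighted C0 p s (ln y) (Phi y) HC0 Hp Hs Hu).
  rewrite HEu, <- HE in HY. fold K in HY.
  assert (Hrate := Rmult_le_compat_l _ _ _ (Rlt_le _ _ (exp_pos (s * ln (ln y)))) (Hineq y Hy)).
  rewrite <- HE in Hrate.
  assert (Hsplit : dU y = (s * (logpow s y / ln y) * Phi y
                           - C0 * logpow s y * rpow (Rabs (Phi y)) p - K) / y
            + (logpow s y * dPhi y
               - logpow s y * (- (C0 / y) * rpow (Rabs (Phi y)) p + C1 / rpow y q))).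
  { unfold dU. rewrite log_densityE by lra. field. repeat split; lra. }
  rewrite Hsplit.
  assert ((s * (logpow s y / ln y) * Phi y - C0 * logpow s y * rpow (Rabs (Phi y)) p - K) / y
          <= 0).
  { unfold Rdiv; apply Rmult_le_0_r; [lra | left; apply Rinv_0_lt_compat; lra]. }
  lra.
Qed.

Lemma continuous_U : continuous U t0.
Proof.
  apply (continuous_ext (fun y => logpow s y * extend_left t0 Phi y + (- C1 * P y - K * ln y))).
  { intros y; unfold U; simpl; ring. }
  apply continuous_mul_add.
  - exists (s * logpow s t0 / (t0 * ln t0)); apply is_derive_logpow; lra.
  - exact (continuous_extend_left t0 Phi _ (Hder t0 (Rle_refl t0))).
  - auto_derive. repeat split.
    + exists (log_density s q t0); apply is_derive_P; lra.
    + lra.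
Qed.

Lemma weighted_bound (t : R) : t0 <= t ->
  logpow s t * Phi t
  <= rpow (ln t0) s * Phi t0 + C1 * I + rpow (s / (C0 * p)) (s - 1) * ln t.
Proof.
  intros Ht. fold K.
  assert (HUt := le_of_derive_nonpos U dU t0 t Ht is_derive_U continuous_U derive_U_nonpos).
  unfold U, P, extend_left in HUt. rewrite !Rmax_right, RInt_point in HUt by lra.
  rewrite (logpow_rpow s t0) in HUt by lra.
  assert (HK : 0 <= K * ln t0) by (apply Rmult_le_pos; [apply rpow_ge0 | left; apply ln_gt0; lra]).
  assert (HPt := Rmult_le_compat_l _ _ _ HC1 (P_le t Ht)).
  change zero with 0 in HUt. unfold P in HPt. lra.
Qed.

Let V (y : R) : R := - extend_left t0 Phi y - C1 * ((I - P y) / logpow s y).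
Let dV (y : R) : R := - dPhi y + C1 * (/ rpow y q + (I - P y) * s / (y * ln y * logpow s y)).

Lemma is_derive_V (y : R) : t0 < y -> is_derive V y (dV y).
Proof.
  intros Hy.
  assert (H := is_derive_minus _ _ y _ _
    (is_derive_opp _ y _ (is_derive_extend_left t0 Phi y _ Hy (Hder y ltac:(lra))))
    (is_derive_scal _ y C1 _
       (is_derive_div _ _ y _ _
          (is_derive_minus _ _ y _ _ (is_derive_const I y) (is_derive_P y ltac:(lra)))
          (is_derive_logpow s y ltac:(lra)) (Rgt_not_eq _ _ (logpow_gt0 s y))))).
  apply (eq_ind _ (is_derive V y) H).
  assert (Hyq : 0 < rpow y q) by (rewrite rpowE by lra; apply exp_pos).
  unfold dV; rewrite log_densityE by lra.
  unfold minus, plus, opp, scal, zero; simpl; unfold mult; simpl.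
  field; repeat split; apply Rgt_not_eq; try apply logpow_gt0; try apply ln_gt0; lra.
Qed.

Lemma derive_V_ge (y : R) : t0 <= y -> C0 / y * rpow (Rabs (Phi y)) p <= dV y.
Proof.
  intros Hy.
  assert (Htail : 0 <= (I - P y) * s / (y * ln y * logpow s y)).
  { assert (HPy := P_le y Hy).
    assert (Hs1 := conjugate_exponent_gt1 p s Hp Hs).
    apply Rdiv_le_0_compat; [apply Rmult_le_pos; lra |].
    apply Rmult_lt_0_compat; [apply Rmult_lt_0_compat; [lra | apply ln_gt0; lra] |].
    apply logpow_gt0. }
  assert (Hrate := Hineq y Hy).
  unfold dV, Rdiv in *. nra.
Qed.

Lemma continuous_V : continuous V t0.
Proof.
  apply (continuous_ext (fun y => (-1) * extend_left t0 Phi y + - C1 * ((I - P y) / logpow s y))).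
  { intros y; unfold V; simpl; ring. }
  apply continuous_mul_add.
  - apply ex_derive_const.
  - exact (continuous_extend_left t0 Phi _ (Hder t0 (Rle_refl t0))).
  - auto_derive. repeat split.
    + exists (log_density s q t0); apply is_derive_P; lra.
    + exists (s * logpow s t0 / (t0 * ln t0)); apply is_derive_logpow; lra.
    + apply Rgt_not_eq, logpow_gt0.
Qed.

Lemma V_le_abs (y : R) : t0 <= y -> V y <= Rabs (Phi y).
Proof.
  intros Hy.
  assert (Htail : 0 <= C1 * ((I - P y) / logpow s y)).
  { apply Rmult_le_pos; [lra | apply Rdiv_le_0_compat; [| apply logpow_gt0]].
    pose proof (P_le y Hy); lra. }
  unfold V, extend_left. rewrite Rmax_right by lra.
  pose proof (Rabs_maj2 (Phi y)); lra.
Qed.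

Lemma weighted_initial_value_ge0 : 0 <= rpow (ln t0) s * Phi t0 + C1 * I.
Proof.
  apply Rnot_lt_le; intros HB.
  assert (HV0 : 0 < V t0).
  { unfold V, P, extend_left. rewrite Rmax_right, RInt_point, <- (logpow_rpow s t0) in * by lra.
    change zero with 0.
    replace (- Phi t0 - C1 * ((I - 0) / logpow s t0))
      with (- (logpow s t0 * Phi t0 + C1 * I) / logpow s t0)
      by (field; apply Rgt_not_eq, logpow_gt0).
    apply Rdiv_lt_0_compat; [lra | apply logpow_gt0]. }
  assert (HV_ge : forall y, t0 <= y -> V t0 <= V y).
  { intros y Hy.
    enough (- V y <= - V t0) by lra.
    apply (le_of_derive_nonpos (fun y => - V y) (fun y => - dV y) t0 y Hy).
    - intros z Hz; exact (is_derive_opp V z _ (is_derive_V z Hz)).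
    - exact (@continuous_opp R_UniformSpace R_AbsRing R_NormedModule V t0 continuous_V).
    - intros z Hz. assert (Hrate := derive_V_ge z Hz).
      assert (0 <= C0 / z * rpow (Rabs (Phi z)) p).
      { apply Rmult_le_pos; [apply Rdiv_le_0_compat; lra | apply rpow_ge0]. }
      lra. }
  apply (no_positive_supersolution C0 p t0 V dV HC0 Hp ltac:(lra) is_derive_V continuous_V).
  - intros y Hy; specialize (HV_ge y Hy); lra.
  - intros y Hy. eapply Rle_trans; [| apply derive_V_ge, Hy].
    apply Rmult_le_compat_l; [apply Rdiv_le_0_compat; lra |].
    apply rpow_le_compat; [| lra].
    specialize (HV_ge y Hy). split; [lra | apply V_le_abs, Hy].
Qed.

End Logarithmic_decay.

Lemma logpow_split (s x : R) : 1 < x -> logpow s x = rpow (ln x) (s - 1) * ln x.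
Proof.
  intros Hx. rewrite rpowE by (apply ln_gt0; exact Hx). unfold logpow.
  replace (s * ln (ln x)) with ((s - 1) * ln (ln x) + ln (ln x)) by ring.
  rewrite exp_plus, exp_ln by (apply ln_gt0; exact Hx). reflexivity.
Qed.

Theorem lemma4p1 (C0 C1 p q t0 pstar I : R) (Phi dPhi : R -> R) :
  0 < C0 -> 0 <= C1 -> 1 < p -> 1 < q -> 2 <= t0 ->
  1 / p + 1 / pstar = 1 ->
  (forall t, t0 <= t -> has_deriv_on_ge t0 Phi t (dPhi t)) ->
  (forall t, t0 <= t ->
     dPhi t <= - (C0 / t) * rpow (Rabs (Phi t)) p + C1 / rpow t q) ->
  is_RInt_gen (fun tau => rpow (ln tau) pstar / rpow tau q)
    (at_point 2) (Rbar_locally p_infty) I ->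
  forall t, t0 <= t ->
    Phi t <=
      (/ ln 2 * (rpow (ln t0) pstar * Phi t0 + C1 * I)
       + rpow (pstar / (C0 * p)) (pstar - 1))
      / rpow (ln t) (pstar - 1).
Proof.
  intros HC0 HC1 Hp _ Ht0 Hs Hder Hineq HI t Ht.
  set (B := rpow (ln t0) pstar * Phi t0 + C1 * I).
  set (K := rpow (pstar / (C0 * p)) (pstar - 1)).
  assert (HB : 0 <= B) by (eapply weighted_initial_value_ge0; eassumption).
  assert (Hbound : logpow pstar t * Phi t <= B + K * ln t)
    by (eapply weighted_bound; eassumption).
  assert (Hln2 : 0 < ln 2) by (apply ln_gt0; lra).
  assert (Hlnt : ln 2 <= ln t) by (apply ln_le; lra).
  assert (HBt : B <= / ln 2 * B * ln t).
  { replace (/ ln 2 * B * ln t) with (B * (ln t / ln 2)) by (field; lra).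
    rewrite <- (Rmult_1_r B) at 1. apply Rmult_le_compat_l; [exact HB |].
    apply (Rmult_le_reg_r (ln 2)); [exact Hln2 |]. field_simplify; lra. }
  assert (Hpow : 0 < rpow (ln t) (pstar - 1)) by (rewrite rpowE by lra; apply exp_pos).
  rewrite logpow_split in Hbound by lra.
  apply (Rmult_le_reg_r (rpow (ln t) (pstar - 1) * ln t)); [apply Rmult_lt_0_compat; lra |].
  replace ((/ ln 2 * B + K) / rpow (ln t) (pstar - 1) * (rpow (ln t) (pstar - 1) * ln t))
    with (/ ln 2 * B * ln t + K * ln t) by (field; lra).
  lra.
Qed.
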